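(* Fix $\Omega>0$, $\beta>0$ and $x\in\mathbb R$. For $h>0$ put $\xi=e^{\beta h}$, $\omega_0=\Omega/h$, $\Omega_0(h)=\frac{\omega_0}{\xi}|1-\xi|$, $\Omega_D(h)=\frac{\omega_0}{\xi}(1+\xi)$, $\omega_h^2(k)=\frac{\omega_0^2}{\xi^2}\big((\xi-\cos k)^2+\sin^2k\big)$, and $$\mathcal G^{(h)}_n(z)=\frac{1}{2\pi}\int_0^{2\pi}\frac{e^{ikn}}{\omega_h^2(k)-z^2}\,dk$$ for integers $n$ and $z$ with $\omega_h^2(k)\ne z^2$ for all $k$. Let $n(h)$ be integers with $n(h)\,h\to|x|$ as $h\to0^+$. Then: (1) if $0\le\omega<\beta\Omega$, $$\lim_{h\to0^+}\frac1h\,\mathcal G^{(h)}_{n(h)}(\omega)=\frac{1}{2\Omega^2}\,\frac{e^{-|x|\sqrt{\beta^2-\omega^2/\Omega^2}}}{\sqrt{\beta^2-\omega^2/\Omega^2}};$$ (2) if $\omega>\beta\Omega$, $$\lim_{h\to0^+}\frac1h\,\lim_{\epsilon\to0^+}\mathcal G^{(h)}_{n(h)}(\omega+i\epsilon)=\frac{i}{2\Omega^2}\,\frac{e^{i|x|\sqrt{\omega^2/\Omega^2-\beta^2}}}{\sqrt{\omega^2/\Omega^2-\beta^2}}.$$ Moreover these limits $g(|x|,\omega)$ satisfy, in the sense of distributions in $x$, $-\Omega^2\big(\frac{d^2}{dx^2}+\frac{\omega^2}{\Omega^2}-\beta^2\big)g(|x|,\omega)=\delta(x)$.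
   Context: This is the continuum limit of the lattice Green's function of the exponentially graded linear chain (masses $m_0\xi^{2p}$, spring constants $m_0\xi^{2p}\omega_0^2$) with lattice spacing $h$, under the scalings $\xi=e^{\beta h}$, $\omega_0^2=\Omega^2/h^2$, particle position $x=ph$; the continuum equation of motion is $e^{2\beta x}\partial_t^2u=\Omega^2\partial_x(e^{2\beta x}\partial_xu)$, which after $u=e^{-\beta x}y$ becomes the Klein–Gordon equation $\Omega^{-2}\partial_t^2y-\partial_x^2y+\beta^2y=0$. The factor $1/h$ converts matrix multiplication into convolution integrals. For small $h$ one has $\Omega_0(h)\to\beta\Omega$ and $\Omega_D(h)\to\infty$. *)

From Stdlib Require Import Reals.
From Coquelicot Require Import Coquelicot.
Open Scope R_scope.

Definition cexpi (t : R) : C := (cos t, sin t).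

Definition xi (beta h : R) : R := exp (beta * h).
Definition om0 (Om h : R) : R := Om / h.
Definition Omega0 (Om beta h : R) : R := om0 Om h / xi beta h * Rabs (1 - xi beta h).
Definition OmegaD (Om beta h : R) : R := om0 Om h / xi beta h * (1 + xi beta h).

Definition omh2 (Om beta h k : R) : R :=
  (om0 Om h) ^ 2 / (xi beta h) ^ 2 * ((xi beta h - cos k) ^ 2 + (sin k) ^ 2).

Definition Gh (Om beta h : R) (n : Z) (z : C) : C :=
  Cmult (RtoC (/ (2 * PI)))
    (@RInt C_R_CompleteNormedModule
       (fun k : R => Cdiv (cexpi (k * IZR n)) (Cminus (RtoC (omh2 Om beta h k)) (Cmult z z)))
       0 (2 * PI)).

Definition gcont (Om beta ax om : R) : C :=
  if Rlt_dec om (beta * Om) then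
    let s := sqrt (beta ^ 2 - om ^ 2 / Om ^ 2) in
    RtoC (/ (2 * Om ^ 2) * (exp (- ax * s) / s))
  else
    let s := sqrt (om ^ 2 / Om ^ 2 - beta ^ 2) in
    Cmult (Cmult Ci (RtoC (/ (2 * Om ^ 2)))) (Cdiv (cexpi (ax * s)) (RtoC s)).

Definition test_function (phi : R -> R) : Prop :=
  (forall (m : nat) (x : R), ex_derive_n phi m x) /\
  (exists M : R, forall x : R, M < Rabs x -> phi x = 0).

(* The denominator of the lattice Green's function is [a - b cos k].  Its Fourier coefficients
   [J n] satisfy the three-term recurrence [b (J (n+1) + J (n-1)) = 2 a J n - 4 pi [n = 0]], are
   even in [n] and bounded; the bounded solutions of the homogeneous recurrence are geometric with
   the root [r] of [b r^2 - 2 a r + b = 0] inside the unit disc, so [J n = r^|n| J 0], and the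
   source term at [n = 0] gives [J 0 = 2 pi / (a - b r)].

   Below the band [r] is real with [ln r ~ - s h], so [r^(n h) -> exp (- s |x|)]; above the band
   the roots of the regularized problem tend, as [eps -> 0+], to [e^(i theta)] with
   [theta ~ s h], so [r^(n h) -> exp (i s |x|)].  In both cases [h (a - b r)] tends to
   [2 Om^2 s] up to the factor [-i].

   For the distributional equation, [g] solves [g'' = - (om^2/Om^2 - beta^2) g] on each half-line;
   integrating by parts twice on [[-M, 0]] and [[0, M]] leaves only the jump [2 g'(0+)] of the
   derivative at the origin. *)
From Stdlib Require Import Reals Lra Lia ZArith.
From Coquelicot Require Import Coquelicot.
Open Scope R_scope.

Notation CV := C_R_CompleteNormedModule.

Section RealLimits.
Context {T : Type} {F : (T -> Prop) -> Prop} {FF : Filter F}.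

Lemma filterlim_limit_eq (f : T -> R) (a b : R) :
  a = b -> filterlim f F (locally a) -> filterlim f F (locally b).
Proof. intros ->; auto. Qed.

Lemma filterlim_Rplus (f g : T -> R) a b :
  filterlim f F (locally a) -> filterlim g F (locally b) ->
  filterlim (fun t => f t + g t) F (locally (a + b)).
Proof.
intros Hf Hg. apply (filterlim_comp_2 f g Rplus Hf Hg).
apply (@filterlim_plus R_AbsRing R_NormedModule).
Qed.

Lemma filterlim_Rmult (f g : T -> R) a b :
  filterlim f F (locally a) -> filterlim g F (locally b) ->
  filterlim (fun t => f t * g t) F (locally (a * b)).
Proof.
intros Hf Hg. apply (filterlim_comp_2 f g Rmult Hf Hg).
apply (@filterlim_mult R_AbsRing).
Qed.

Lemma filterlim_comp_derivable (f : T -> R) (g : R -> R) a :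
  ex_derive g a -> filterlim f F (locally a) ->
  filterlim (fun t => g (f t)) F (locally (g a)).
Proof.
intros Hd Hf. eapply filterlim_comp; [exact Hf|].
exact (ex_derive_continuous g a Hd).
Qed.

Lemma filterlim_Ropp (f : T -> R) a :
  filterlim f F (locally a) -> filterlim (fun t => - f t) F (locally (- a)).
Proof. apply (filterlim_comp_derivable f Ropp). auto_derive; auto. Qed.

Lemma filterlim_Rminus (f g : T -> R) a b :
  filterlim f F (locally a) -> filterlim g F (locally b) ->
  filterlim (fun t => f t - g t) F (locally (a - b)).
Proof. intros. apply filterlim_Rplus, filterlim_Ropp; auto. Qed.

Lemma filterlim_Rinv (f : T -> R) a : a <> 0 ->
  filterlim f F (locally a) -> filterlim (fun t => / f t) F (locally (/ a)).
Proof. intros Ha. apply (filterlim_comp_derivable f Rinv). auto_derive; auto. Qed.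

Lemma filterlim_Rdiv (f g : T -> R) a b : b <> 0 ->
  filterlim f F (locally a) -> filterlim g F (locally b) ->
  filterlim (fun t => f t / g t) F (locally (a / b)).
Proof. intros. apply filterlim_Rmult, filterlim_Rinv; auto. Qed.

Lemma filterlim_Rsqr (f : T -> R) a :
  filterlim f F (locally a) -> filterlim (fun t => f t ^ 2) F (locally (a ^ 2)).
Proof. apply (filterlim_comp_derivable f (fun y => y ^ 2)). auto_derive; auto. Qed.

Lemma filterlim_sqrt (f : T -> R) a : 0 < a ->
  filterlim f F (locally a) -> filterlim (fun t => sqrt (f t)) F (locally (sqrt a)).
Proof. intros Ha. apply (filterlim_comp_derivable f sqrt). auto_derive; lra. Qed.

Lemma filterlim_Rabs_comp (f : T -> R) a :
  filterlim f F (locally a) -> filterlim (fun t => Rabs (f t)) F (locally (Rabs a)).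
Proof. intros H. eapply filterlim_comp; [exact H | apply (filterlim_Rabs (Finite a))]. Qed.

Lemma filterlim_eventually_gt (g : T -> R) l a :
  filterlim g F (locally l) -> a < l -> F (fun t => a < g t).
Proof.
intros Hg Ha. assert (Hp : 0 < l - a) by lra.
generalize (proj1 (filterlim_locally g l) Hg (mkposreal _ Hp)).
apply filter_imp. intros t Hb. change (Rabs (g t - l) < l - a) in Hb.
apply Rabs_def2 in Hb. lra.
Qed.

Lemma filterlim_eventually_lt (g : T -> R) l a :
  filterlim g F (locally l) -> l < a -> F (fun t => g t < a).
Proof.
intros Hg Ha. assert (Hp : 0 < a - l) by lra.
generalize (proj1 (filterlim_locally g l) Hg (mkposreal _ Hp)).
apply filter_imp. intros t Hb. change (Rabs (g t - l) < a - l) in Hb.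
apply Rabs_def2 in Hb. lra.
Qed.

Lemma filterlim_difference_quotient (f : R -> R) l (y : T -> R) :
  f 0 = 0 -> derivable_pt_lim f 0 l -> filterlim y F (locally 0) ->
  F (fun t => y t <> 0) -> filterlim (fun t => f (y t) / y t) F (locally l).
Proof.
intros H0 Hd Hy Hnz. apply filterlim_locally. intros eps.
destruct (Hd eps (cond_pos eps)) as [d Hdd].
generalize (filter_and _ _ (proj1 (filterlim_locally y 0) Hy d) Hnz).
apply filter_imp. intros t [Hbt Hn].
change (Rabs (y t - 0) < d) in Hbt. rewrite Rminus_0_r in Hbt.
specialize (Hdd (y t) Hn Hbt). rewrite Rplus_0_l, H0, Rminus_0_r in Hdd. exact Hdd.
Qed.

End RealLimits.

Lemma at_right_pos : at_right 0 (fun h => 0 < h).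
Proof. exists (mkposreal 1 Rlt_0_1). auto. Qed.

Lemma filterlim_at_right_id : filterlim (fun h : R => h) (at_right 0) (locally 0).
Proof. intros P [eps HP]. exists eps. intros y Hy _. apply HP, Hy. Qed.

Section ComplexLimits.
Context {T : Type} {F : (T -> Prop) -> Prop} {FF : Filter F}.

Lemma filterlim_C (f : T -> C) (l : C) :
  filterlim (fun t => fst (f t)) F (locally (fst l)) ->
  filterlim (fun t => snd (f t)) F (locally (snd l)) ->
  filterlim f F (locally l).
Proof.
intros H1 H2 P [eps HP].
assert (A1 := H1 (ball (fst l) eps) (locally_ball _ _)).
assert (A2 := H2 (ball (snd l) eps) (locally_ball _ _)).
unfold filtermap in *. generalize (filter_and _ _ A1 A2). apply filter_imp.
intros t [B1 B2]. apply HP. split; auto.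
Qed.

Lemma filterlim_C_fst (f : T -> C) (l : C) : filterlim f F (locally l) ->
  filterlim (fun t => fst (f t)) F (locally (fst l)).
Proof. destruct l. intros H. eapply filterlim_comp; [exact H | apply continuous_fst]. Qed.

Lemma filterlim_C_snd (f : T -> C) (l : C) : filterlim f F (locally l) ->
  filterlim (fun t => snd (f t)) F (locally (snd l)).
Proof. destruct l. intros H. eapply filterlim_comp; [exact H | apply continuous_snd]. Qed.

Lemma filterlim_RtoC (f : T -> R) a :
  filterlim f F (locally a) -> filterlim (fun t => RtoC (f t)) F (locally (RtoC a)).
Proof. intros. apply filterlim_C; simpl; auto using filterlim_const. Qed.

Lemma filterlim_Cminus (f g : T -> C) (a b : C) :
  filterlim f F (locally a) -> filterlim g F (locally b) ->
  filterlim (fun t => (f t - g t)%C) F (locally (a - b)%C).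
Proof.
intros Hf Hg. apply filterlim_C; simpl; apply filterlim_Rminus;
  first [apply filterlim_C_fst | apply filterlim_C_snd]; auto.
Qed.

Lemma filterlim_Cmult (f g : T -> C) (a b : C) :
  filterlim f F (locally a) -> filterlim g F (locally b) ->
  filterlim (fun t => (f t * g t)%C) F (locally (a * b)%C).
Proof.
intros Hf Hg. apply filterlim_C; simpl;
  [apply filterlim_Rminus | apply filterlim_Rplus]; apply filterlim_Rmult;
  first [apply filterlim_C_fst | apply filterlim_C_snd]; auto.
Qed.

Lemma filterlim_Cinv (f : T -> C) (a : C) : a <> 0%C ->
  filterlim f F (locally a) -> filterlim (fun t => (/ f t)%C) F (locally (/ a)%C).
Proof.
intros Ha Hf.
assert (Hd : fst a ^ 2 + snd a ^ 2 <> 0).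
{ intro E. apply Ha. destruct a as [u v]; simpl in *.
  assert (u = 0) by nra. assert (v = 0) by nra. subst; reflexivity. }
assert (Hden : filterlim (fun t => fst (f t) ^ 2 + snd (f t) ^ 2) F
                 (locally (fst a ^ 2 + snd a ^ 2))).
{ apply filterlim_Rplus; apply filterlim_Rsqr;
    [apply filterlim_C_fst | apply filterlim_C_snd]; auto. }
apply filterlim_C; simpl; apply filterlim_Rmult; auto using filterlim_Rinv.
- apply filterlim_C_fst; auto.
- apply filterlim_Ropp, filterlim_C_snd; auto.
Qed.

Lemma filterlim_Cdiv (f g : T -> C) (a b : C) : b <> 0%C ->
  filterlim f F (locally a) -> filterlim g F (locally b) ->
  filterlim (fun t => (f t / g t)%C) F (locally (a / b)%C).
Proof. intros. apply filterlim_Cmult, filterlim_Cinv; auto. Qed.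

Lemma filterlim_Cpow (f : T -> C) (a : C) m :
  filterlim f F (locally a) -> filterlim (fun t => Cpow (f t) m) F (locally (Cpow a m)).
Proof.
intros Hf. induction m; simpl; [apply filterlim_const | apply filterlim_Cmult; auto].
Qed.

Lemma filterlim_cexpi (f : T -> R) a :
  filterlim f F (locally a) -> filterlim (fun t => cexpi (f t)) F (locally (cexpi a)).
Proof.
intros H. apply filterlim_C; simpl; apply filterlim_comp_derivable; auto; auto_derive; auto.
Qed.

Lemma filterlim_Cmod (f : T -> C) (a : C) : a <> 0%C ->
  filterlim f F (locally a) -> filterlim (fun t => Cmod (f t)) F (locally (Cmod a)).
Proof.
intros Ha H. apply filterlim_sqrt.
- destruct a as [u v]. assert (H0 : u <> 0 \/ v <> 0).
  { destruct (Req_dec u 0), (Req_dec v 0); subst; auto. }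
  simpl. destruct H0 as [Hu | Hv]; [assert (0 < u * u) | assert (0 < v * v)]; nra.
- apply filterlim_Rplus; apply filterlim_Rsqr;
    [apply filterlim_C_fst | apply filterlim_C_snd]; auto.
Qed.

End ComplexLimits.

Lemma is_RInt_C (f : R -> C) a b l1 l2 :
  is_RInt (fun t => fst (f t)) a b l1 -> is_RInt (fun t => snd (f t)) a b l2 ->
  @is_RInt CV f a b (l1, l2).
Proof.
intros H1 H2. exact (@is_RInt_fct_extend_pair R_NormedModule R_NormedModule f a b l1 l2 H1 H2).
Qed.

Lemma is_RInt_C_fst (f : R -> C) a b l :
  @is_RInt CV f a b l -> is_RInt (fun t => fst (f t)) a b (fst l).
Proof. intros H. exact (@is_RInt_fct_extend_fst R_NormedModule R_NormedModule f a b l H). Qed.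

Lemma is_RInt_C_snd (f : R -> C) a b l :
  @is_RInt CV f a b l -> is_RInt (fun t => snd (f t)) a b (snd l).
Proof. intros H. exact (@is_RInt_fct_extend_snd R_NormedModule R_NormedModule f a b l H). Qed.

Lemma is_RInt_Cmult_l (f : R -> C) a b l (c : C) :
  @is_RInt CV f a b l -> @is_RInt CV (fun t => (c * f t)%C) a b (c * l)%C.
Proof.
intros H. apply is_RInt_C; simpl.
- apply (is_RInt_minus (V := R_NormedModule));
    apply (is_RInt_scal (V := R_NormedModule));
    [apply is_RInt_C_fst | apply is_RInt_C_snd]; auto.
- apply (is_RInt_plus (V := R_NormedModule));
    apply (is_RInt_scal (V := R_NormedModule));
    [apply is_RInt_C_snd | apply is_RInt_C_fst]; auto.
Qed.

Lemma is_RInt_Cplus (f g : R -> C) a b l1 l2 :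
  @is_RInt CV f a b l1 -> @is_RInt CV g a b l2 ->
  @is_RInt CV (fun t => (f t + g t)%C) a b (l1 + l2)%C.
Proof.
intros H1 H2. apply is_RInt_C; simpl.
- apply (is_RInt_plus (V := R_NormedModule)); apply is_RInt_C_fst; auto.
- apply (is_RInt_plus (V := R_NormedModule)); apply is_RInt_C_snd; auto.
Qed.

Lemma norm_CV (z : C) :
  @norm R_AbsRing (CompleteNormedModule.NormedModule R_AbsRing CV) z = Cmod z.
Proof. symmetry. apply Cmod_norm. Qed.

Lemma cexpi_plus s t : cexpi (s + t) = (cexpi s * cexpi t)%C.
Proof. unfold cexpi, Cmult; simpl. rewrite cos_plus, sin_plus. f_equal; ring. Qed.

Lemma cexpi_add_opp t : (cexpi t + cexpi (- t) = RtoC (2 * cos t))%C.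
Proof. unfold cexpi, Cplus, RtoC; simpl. rewrite cos_neg, sin_neg. f_equal; ring. Qed.

Lemma cexpi_mul_opp t : (cexpi t * cexpi (- t) = 1)%C.
Proof.
unfold cexpi, Cmult; simpl. rewrite cos_neg, sin_neg.
generalize (sin2_cos2 t); unfold Rsqr; intro. unfold RtoC. f_equal; nra.
Qed.

Lemma Cmod_cexpi t : Cmod (cexpi t) = 1.
Proof.
unfold Cmod, cexpi; simpl.
replace (cos t * (cos t * 1) + sin t * (sin t * 1)) with 1; [apply sqrt_1|].
generalize (sin2_cos2 t). unfold Rsqr. intros; nra.
Qed.

Lemma Cpow_cexpi t m : Cpow (cexpi t) m = cexpi (INR m * t).
Proof.
induction m; simpl Cpow.
- unfold cexpi. rewrite Rmult_0_l, cos_0, sin_0. reflexivity.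
- rewrite IHm, <- cexpi_plus, S_INR. f_equal. ring.
Qed.

Lemma Cpow_RtoC (y : R) m : Cpow (RtoC y) m = RtoC (y ^ m).
Proof.
induction m; simpl; [reflexivity|].
rewrite IHm. unfold Cmult, RtoC; simpl. f_equal; ring.
Qed.

Lemma RtoC_neq_0 (y : R) : y <> 0 -> RtoC y <> 0%C.
Proof. intros H E. injection E. auto. Qed.

Lemma sin_2PI_mult n : sin (2 * PI * IZR n) = 0.
Proof. apply sin_eq_0_1. exists (2 * n)%Z. rewrite mult_IZR. ring. Qed.

Lemma cos_2PI_mult n : cos (2 * PI * IZR n) = 1.
Proof.
replace (2 * PI * IZR n) with (2 * (IZR n * PI)) by ring.
rewrite cos_2a_sin, sin_eq_0_1 by (exists n; auto). ring.
Qed.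

Lemma cexpi_2PI_mult n : cexpi (2 * PI * IZR n) = 1%C.
Proof. unfold cexpi. rewrite sin_2PI_mult, cos_2PI_mult. reflexivity. Qed.

Lemma is_RInt_R_const (c a b l : R) : l = (b - a) * c -> is_RInt (fun _ => c) a b l.
Proof. intros ->. apply (@is_RInt_const R_NormedModule). Qed.

Lemma is_RInt_R_derive (G g : R -> R) a b l :
  (forall t, is_derive G t (g t)) -> (forall t, continuous g t) ->
  l = G b - G a -> is_RInt g a b l.
Proof. intros HG Hg ->. apply (is_RInt_derive G g); auto. Qed.

Lemma is_RInt_cexpi_period n :
  @is_RInt CV (fun k => cexpi (k * IZR n)) 0 (2 * PI)
    (if Z.eq_dec n 0 then RtoC (2 * PI) else RtoC 0).
Proof.
destruct (Z.eq_dec n 0) as [->|Hn0]; apply is_RInt_C; simpl.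
- apply (is_RInt_ext (fun _ => 1)); [intros; rewrite Rmult_0_r, cos_0; auto|].
  apply is_RInt_R_const. ring.
- apply (is_RInt_ext (fun _ => 0)); [intros; rewrite Rmult_0_r, sin_0; auto|].
  apply is_RInt_R_const. ring.
- apply (is_RInt_R_derive (fun k => sin (k * IZR n) / IZR n)).
  + intros k. auto_derive; auto. field. apply not_0_IZR, Hn0.
  + intros k. apply (ex_derive_continuous (fun k => cos (k * IZR n))). auto_derive; auto.
  + rewrite sin_2PI_mult, Rmult_0_l, sin_0. field. apply not_0_IZR, Hn0.
- apply (is_RInt_R_derive (fun k => - cos (k * IZR n) / IZR n)).
  + intros k. auto_derive; auto. field. apply not_0_IZR, Hn0.
  + intros k. apply (ex_derive_continuous (fun k => sin (k * IZR n))). auto_derive; auto.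
  + rewrite cos_2PI_mult, Rmult_0_l, cos_0. field. apply not_0_IZR, Hn0.
Qed.

Lemma le_geometric_nonpos (c K q : R) : 0 <= q < 1 ->
  (forall m : nat, c <= K * q ^ m) -> c <= 0.
Proof.
intros Hq H. destruct (Rle_dec c 0) as [|Hc]; auto. exfalso.
assert (HK : c <= K) by (specialize (H 0%nat); simpl in H; lra).
destruct (pow_lt_1_zero q ltac:(rewrite Rabs_pos_eq; lra) (c / K)) as [N HN].
{ apply Rdiv_lt_0_compat; lra. }
specialize (HN N (le_n _)). specialize (H N).
rewrite Rabs_pos_eq in HN by (apply pow_le; lra).
assert (HKq : K * q ^ N < K * (c / K)) by (apply Rmult_lt_compat_l; lra).
replace (K * (c / K)) with c in HKq by (field; lra). lra.
Qed.

Section BoundedRecurrence.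
Variables (a b r : C) (J : Z -> C) (K : R).
Hypothesis Hb : b <> 0%C.
Hypothesis Hr : Cmod r < 1.
Hypothesis Hroot : (b * r * r - RtoC 2 * a * r + b = 0)%C.
Hypothesis HJsym : forall n, J (- n)%Z = J n.
Hypothesis HJbound : forall n, Cmod (J n) <= K.
Hypothesis HJrec : forall n, n <> 0%Z ->
  (b * (J (n + 1)%Z + J (n - 1)%Z) = RtoC 2 * a * J n)%C.

Lemma root_neq_0 : r <> 0%C.
Proof. intros E. apply Hb. rewrite <- Hroot, E. ring. Qed.

(* Since [1 / r] is the other root, the defect of [J] from a geometric sequence of ratio [r]
   grows like [r ^ (- m)]; boundedness forces it to vanish. *)
Let defect (m : nat) : C := (J (Z.of_nat (S m)) - r * J (Z.of_nat m))%C.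

Lemma defect_step m : (defect (S m) * r = defect m)%C.
Proof.
unfold defect.
assert (Hm := HJrec (Z.of_nat (S m)) ltac:(lia)).
replace (Z.of_nat (S m) + 1)%Z with (Z.of_nat (S (S m))) in Hm by lia.
replace (Z.of_nat (S m) - 1)%Z with (Z.of_nat m) in Hm by lia.
set (J2 := J (Z.of_nat (S (S m)))) in *.
set (J1 := J (Z.of_nat (S m))) in *.
set (J0 := J (Z.of_nat m)) in *.
assert (E : (b * ((J2 - r * J1) * r - (J1 - r * J0))
             = r * (b * (J2 + J0) - RtoC 2 * a * J1) - J1 * (b * r * r - RtoC 2 * a * r + b))%C)
  by ring.
rewrite Hm, Hroot in E.
replace ((J2 - r * J1) * r)%C
  with (/ b * (b * ((J2 - r * J1) * r - (J1 - r * J0))) + (J1 - r * J0))%C by (field; auto).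
rewrite E. ring.
Qed.

Lemma defect_pow m : (defect m * Cpow r m = defect 0)%C.
Proof. induction m; simpl; [ring|]. rewrite <- IHm, <- (defect_step m). ring. Qed.

Lemma defect_0 : defect 0 = 0%C.
Proof.
apply Cmod_eq_0, Rle_antisym; [|apply Cmod_ge_0].
apply (le_geometric_nonpos _ (2 * K) (Cmod r)); [split; auto using Cmod_ge_0|].
intros m. rewrite <- (defect_pow m), Cmod_mult, Cmod_pow.
apply Rmult_le_compat_r; [apply pow_le, Cmod_ge_0|].
unfold defect, Cminus. eapply Rle_trans; [apply Cmod_triangle|].
rewrite Cmod_opp, Cmod_mult.
assert (Cmod r * Cmod (J (Z.of_nat m)) <= 1 * K)
  by (apply Rmult_le_compat; auto using Cmod_ge_0; lra).
specialize (HJbound (Z.of_nat (S m))). lra.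
Qed.

Lemma bounded_recurrence_geometric n : J n = (Cpow r (Z.abs_nat n) * J 0%Z)%C.
Proof.
assert (Hnat : forall m, J (Z.of_nat m) = (Cpow r m * J 0%Z)%C).
{ induction m; [simpl; ring|].
  assert (Hd : defect m = 0%C).
  { destruct (Ceq_dec (defect m) 0%C) as [|Hn]; auto. exfalso.
    apply (Cmult_neq_0 _ _ Hn (Cpow_nz r m root_neq_0)).
    rewrite defect_pow. apply defect_0. }
  unfold defect in Hd. apply Ceq_minus in Hd. rewrite Hd, IHm. simpl Cpow. ring. }
destruct (Z_le_gt_dec 0 n).
- rewrite <- Hnat. f_equal. lia.
- rewrite <- Hnat, <- HJsym. f_equal. lia.
Qed.

End BoundedRecurrence.

Definition cos_denom (a b : C) (k : R) : C := (a - b * RtoC (cos k))%C.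
Definition lattice_integrand (a b : C) (n : Z) (k : R) : C :=
  (cexpi (k * IZR n) / cos_denom a b k)%C.
Definition lattice_integral (a b : C) (n : Z) : C :=
  @RInt CV (lattice_integrand a b n) 0 (2 * PI).

Lemma one_sub_mul_cexpi_neq_0 (r : C) t : Cmod r < 1 -> (1 - r * cexpi t)%C <> 0%C.
Proof.
intros Hr E. apply Ceq_minus in E.
assert (H : Cmod (r * cexpi t) = 1) by (rewrite <- E; apply Cmod_1).
rewrite Cmod_mult, Cmod_cexpi in H. lra.
Qed.

Section LatticeIntegral.
Variables (a b r : C).
Hypothesis Hb : b <> 0%C.
Hypothesis Hr : Cmod r < 1.
Hypothesis Hroot : (b * r * r - RtoC 2 * a * r + b = 0)%C.

Lemma cos_denom_factor k :
  (RtoC 2 * r * cos_denom a b k = b * (1 - r * cexpi k) * (1 - r * cexpi (- k)))%C.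
Proof.
replace (b * (1 - r * cexpi k) * (1 - r * cexpi (- k)))%C
  with (b * (1 - r * (cexpi k + cexpi (- k)) + r * r * (cexpi k * cexpi (- k))))%C by ring.
rewrite cexpi_add_opp, cexpi_mul_opp, RtoC_mult. unfold cos_denom.
apply Ceq_minus. transitivity (- (b * r * r - RtoC 2 * a * r + b))%C; [ring|].
rewrite Hroot. ring.
Qed.

Lemma cos_denom_neq_0 k : cos_denom a b k <> 0%C.
Proof.
intros E.
apply (Cmult_neq_0 _ _ (Cmult_neq_0 _ _ Hb (one_sub_mul_cexpi_neq_0 r k Hr))
         (one_sub_mul_cexpi_neq_0 r (- k) Hr)).
rewrite <- cos_denom_factor, E. ring.
Qed.

Lemma continuous_lattice_integrand n k : continuous (lattice_integrand a b n) k.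
Proof.
apply filterlim_Cdiv; [apply cos_denom_neq_0 | |].
- apply filterlim_cexpi, filterlim_Rmult; [apply filterlim_id | apply filterlim_const].
- apply filterlim_Cminus; [apply filterlim_const|].
  apply filterlim_Cmult; [apply filterlim_const|].
  apply filterlim_RtoC, continuous_cos.
Qed.

Lemma ex_RInt_lattice_integrand n s t : @ex_RInt CV (lattice_integrand a b n) s t.
Proof. apply (ex_RInt_continuous (V := CV)). intros; apply continuous_lattice_integrand. Qed.

Lemma lattice_integrand_recurrence n k :
  (b * (lattice_integrand a b (n + 1) k + lattice_integrand a b (n - 1) k)
   = RtoC 2 * a * lattice_integrand a b n k + - RtoC 2 * cexpi (k * IZR n))%C.
Proof.
assert (HD := cos_denom_neq_0 k). unfold lattice_integrand.
rewrite plus_IZR, minus_IZR.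
replace (k * (IZR n + 1)) with (k * IZR n + k) by ring.
replace (k * (IZR n - 1)) with (k * IZR n + - k) by ring.
rewrite !cexpi_plus.
replace (b * (cexpi (k * IZR n) * cexpi k / cos_denom a b k
              + cexpi (k * IZR n) * cexpi (- k) / cos_denom a b k))%C
  with (b * cexpi (k * IZR n) * (cexpi k + cexpi (- k)) / cos_denom a b k)%C by (field; auto).
rewrite cexpi_add_opp, (RtoC_mult 2 (cos k)).
replace (b * cexpi (k * IZR n) * (RtoC 2 * RtoC (cos k)))%C
  with (RtoC 2 * cexpi (k * IZR n) * (a - cos_denom a b k))%C by (unfold cos_denom; ring).
field; auto.
Qed.

Lemma lattice_integral_recurrence n :
  (b * (lattice_integral a b (n + 1) + lattice_integral a b (n - 1))
   = RtoC 2 * a * lattice_integral a b n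
     + - RtoC 2 * (if Z.eq_dec n 0 then RtoC (2 * PI) else RtoC 0))%C.
Proof.
assert (I := fun m => RInt_correct _ _ _ (ex_RInt_lattice_integrand m 0 (2 * PI))).
transitivity (@RInt CV (fun k => b * (lattice_integrand a b (n + 1) k
                                       + lattice_integrand a b (n - 1) k))%C 0 (2 * PI)).
- symmetry. apply (@is_RInt_unique CV), is_RInt_Cmult_l, is_RInt_Cplus; apply I.
- apply (@is_RInt_unique CV).
  apply (is_RInt_ext (V := CV) _ _ _ _ _ (fun k _ => eq_sym (lattice_integrand_recurrence n k))).
  apply is_RInt_Cplus; apply is_RInt_Cmult_l; [apply I | apply is_RInt_cexpi_period].
Qed.

Lemma lattice_integrand_reflect n k :
  lattice_integrand a b n (-1 * k + 2 * PI) = lattice_integrand a b (- n) k.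
Proof.
unfold lattice_integrand, cos_denom. f_equal.
- replace ((-1 * k + 2 * PI) * IZR n) with (k * IZR (- n) + 2 * PI * IZR n)
    by (rewrite opp_IZR; ring).
  rewrite cexpi_plus, cexpi_2PI_mult. ring.
- rewrite cos_plus, cos_2PI, sin_2PI. replace (-1 * k) with (- k) by ring.
  rewrite cos_neg. f_equal. f_equal. f_equal. ring.
Qed.

Lemma lattice_integral_opp n : lattice_integral a b (- n) = lattice_integral a b n.
Proof.
apply (@is_RInt_unique CV).
rewrite <- (opp_opp (lattice_integral a b n)).
apply (is_RInt_ext (V := CV)
         (fun k => opp (scal (-1) (lattice_integrand a b n (-1 * k + 2 * PI))))).
{ intros k _. rewrite lattice_integrand_reflect.
  change (-1) with (@opp R_Ring one). rewrite scal_opp_one. apply opp_opp. }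
apply (is_RInt_opp (V := CV)), (is_RInt_comp_lin (V := CV)).
replace (-1 * 0 + 2 * PI) with (2 * PI) by ring.
replace (-1 * (2 * PI) + 2 * PI) with 0 by ring.
apply (is_RInt_swap (V := CV)), RInt_correct, ex_RInt_lattice_integrand.
Qed.

Lemma lattice_integral_bound n :
  Cmod (lattice_integral a b n) <= RInt (fun k => / Cmod (cos_denom a b k)) 0 (2 * PI).
Proof.
assert (Hcont : forall k, continuous (fun k => / Cmod (cos_denom a b k)) k).
{ intros k. apply filterlim_Rinv.
  - apply Rgt_not_eq, Cmod_gt_0, cos_denom_neq_0.
  - apply filterlim_Cmod; [apply cos_denom_neq_0|].
    apply filterlim_Cminus; [apply filterlim_const|].
    apply filterlim_Cmult; [apply filterlim_const|].
    apply filterlim_RtoC, continuous_cos. }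
rewrite <- norm_CV.
apply (@norm_RInt_le CV (lattice_integrand a b n) (fun k => / Cmod (cos_denom a b k)) 0 (2 * PI)).
- generalize PI_RGT_0; lra.
- intros k _. rewrite norm_CV. unfold lattice_integrand.
  rewrite Cmod_div, Cmod_cexpi by apply cos_denom_neq_0. unfold Rdiv. lra.
- apply RInt_correct, ex_RInt_lattice_integrand.
- apply (RInt_correct (V := R_CompleteNormedModule)).
  apply (ex_RInt_continuous (V := R_CompleteNormedModule)). auto.
Qed.

Theorem lattice_integral_closed_form n :
  (RtoC (/ (2 * PI)) * lattice_integral a b n = Cpow r (Z.abs_nat n) / (a - b * r))%C.
Proof.
assert (HPI : 2 * PI <> 0) by (generalize PI_RGT_0; lra).
set (J := lattice_integral a b).
assert (Hrec : forall m, m <> 0%Z -> (b * (J (m + 1)%Z + J (m - 1)%Z) = RtoC 2 * a * J m)%C).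
{ intros m Hm. unfold J. rewrite lattice_integral_recurrence.
  destruct (Z.eq_dec m 0); [contradiction | ring]. }
assert (Hgeom := bounded_recurrence_geometric a b r J _ Hb Hr Hroot
                   lattice_integral_opp lattice_integral_bound Hrec).
assert (HJ0 : (J 0%Z * (a - b * r) = RtoC (2 * PI))%C).
{ assert (H0 := lattice_integral_recurrence 0). fold J in H0.
  rewrite (Hgeom (0 + 1)%Z), (Hgeom (0 - 1)%Z) in H0. simpl in H0.
  destruct (Z.eq_dec 0 0) as [_|]; [|contradiction].
  assert (H2 : RtoC 2 <> 0%C) by (apply RtoC_neq_0; lra).
  transitivity (/ RtoC 2 * (RtoC 2 * a * J 0%Z - b * (r * 1 * J 0%Z + r * 1 * J 0%Z)))%C;
    [field; auto|].
  rewrite H0. field; auto. }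
assert (Hden : (a - b * r)%C <> 0%C).
{ intros E. rewrite E, Cmult_0_r in HJ0. apply (RtoC_neq_0 _ HPI). auto. }
rewrite Hgeom, RtoC_inv by auto.
replace (J 0%Z) with (RtoC (2 * PI) / (a - b * r))%C by (rewrite <- HJ0; field; auto).
field. split; auto. apply RtoC_neq_0; auto.
Qed.

End LatticeIntegral.

Definition lattice_scale (Om beta h : R) : R := om0 Om h ^ 2 / xi beta h ^ 2.
Definition green_b (Om beta h : R) : R := 2 * lattice_scale Om beta h * xi beta h.
Definition green_a (Om beta h : R) (z : C) : C :=
  (RtoC (lattice_scale Om beta h * (1 + xi beta h ^ 2)) - z * z)%C.

(* [omh2 = c ((xi - cos k)^2 + sin^2 k) = c (1 + xi^2) - 2 c xi cos k] with [c = lattice_scale]. *)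
Lemma Gh_lattice_integral Om beta h n z :
  Gh Om beta h n z
  = (RtoC (/ (2 * PI)) * lattice_integral (green_a Om beta h z) (RtoC (green_b Om beta h)) n)%C.
Proof.
unfold Gh, lattice_integral. f_equal. apply RInt_ext. intros k _.
unfold lattice_integrand. f_equal.
unfold cos_denom, green_a, green_b, omh2. fold (lattice_scale Om beta h).
unfold Cminus, Cplus, Copp, Cmult, RtoC; simpl. apply injective_projections; simpl; [|ring].
replace (sin k * (sin k * 1)) with (1 - cos k * cos k)
  by (generalize (sin2_cos2 k); unfold Rsqr; intros; lra).
ring.
Qed.

Definition green_a_real (Om beta om h : R) : R :=
  lattice_scale Om beta h * (1 + xi beta h ^ 2) - om ^ 2.

Lemma green_a_RtoC Om beta h om : green_a Om beta h (RtoC om) = RtoC (green_a_real Om beta om h).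
Proof.
unfold green_a, green_a_real, Cminus, Cplus, Copp, Cmult, RtoC; simpl.
apply injective_projections; simpl; ring.
Qed.

Lemma green_a_shift Om beta h om eps :
  green_a Om beta h (om, eps) = ((green_a_real Om beta om h + eps ^ 2, - (2 * om * eps)) : C).
Proof.
unfold green_a, green_a_real, Cminus, Cplus, Copp, Cmult, RtoC; simpl.
apply injective_projections; simpl; ring.
Qed.

Lemma xi_pos beta h : 0 < xi beta h.
Proof. apply exp_pos. Qed.

Lemma green_b_pos Om beta h : 0 < Om -> 0 < h -> 0 < green_b Om beta h.
Proof.
intros. unfold green_b, lattice_scale, om0. assert (0 < xi beta h) by apply xi_pos.
assert (0 < (Om / h) ^ 2 / xi beta h ^ 2).
{ apply Rdiv_lt_0_compat; apply pow_lt; auto. apply Rdiv_lt_0_compat; auto. }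
nra.
Qed.

Lemma filterlim_xi beta : filterlim (xi beta) (at_right 0) (locally 1).
Proof.
unfold xi. apply (filterlim_limit_eq _ (exp (beta * 0))); [rewrite Rmult_0_r; apply exp_0|].
apply (filterlim_comp_derivable (fun h => beta * h) exp); [auto_derive; auto|].
apply filterlim_Rmult; [apply filterlim_const | apply filterlim_at_right_id].
Qed.

Lemma filterlim_xi_quotient beta :
  filterlim (fun h => (xi beta h - 1) / h) (at_right 0) (locally beta).
Proof.
apply (filterlim_difference_quotient (fun t => exp (beta * t) - 1) beta (fun h => h)).
- rewrite Rmult_0_r, exp_0. ring.
- apply is_derive_Reals. auto_derive; auto. rewrite Rmult_0_r, exp_0. ring.
- apply filterlim_at_right_id.
- generalize at_right_pos. apply filter_imp. intros; lra.
Qed.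

(* The coefficients [a ~ b ~ 2 Om^2 / h^2] blow up; what survives as [h -> 0] are these
   three combinations. *)
Section GreenCoefficients.
Variables (Om beta om : R).
Let A := green_a_real Om beta om.
Let B := green_b Om beta.

Lemma filterlim_green_gap :
  filterlim (fun h => A h - B h) (at_right 0) (locally (Om ^ 2 * beta ^ 2 - om ^ 2)).
Proof.
apply (filterlim_ext_loc (fun h => Om ^ 2 * ((xi beta h - 1) / h) ^ 2 / xi beta h ^ 2 - om ^ 2)).
{ generalize at_right_pos. apply filter_imp. intros h Hh.
  assert (xi beta h <> 0) by (apply Rgt_not_eq, xi_pos).
  unfold A, B, green_a_real, green_b, lattice_scale, om0. field; lra. }
apply (filterlim_limit_eq _ (Om ^ 2 * beta ^ 2 / 1 ^ 2 - om ^ 2)); [field|].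
apply filterlim_Rminus; [|apply filterlim_const].
apply filterlim_Rdiv; [lra | |apply filterlim_Rsqr, filterlim_xi].
apply filterlim_Rmult; [apply filterlim_const | apply filterlim_Rsqr, filterlim_xi_quotient].
Qed.

Lemma filterlim_scaled_green_sum :
  filterlim (fun h => h ^ 2 * (A h + B h)) (at_right 0) (locally (4 * Om ^ 2)).
Proof.
apply (filterlim_ext_loc (fun h => Om ^ 2 * (1 + xi beta h) ^ 2 / xi beta h ^ 2 - h ^ 2 * om ^ 2)).
{ generalize at_right_pos. apply filter_imp. intros h Hh.
  assert (xi beta h <> 0) by (apply Rgt_not_eq, xi_pos).
  unfold A, B, green_a_real, green_b, lattice_scale, om0. field; lra. }
apply (filterlim_limit_eq _ (Om ^ 2 * (1 + 1) ^ 2 / 1 ^ 2 - 0 ^ 2 * om ^ 2)); [field|].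
apply filterlim_Rminus.
- apply filterlim_Rdiv; [lra | |apply filterlim_Rsqr, filterlim_xi].
  apply filterlim_Rmult; [apply filterlim_const|].
  apply filterlim_Rsqr, filterlim_Rplus; [apply filterlim_const | apply filterlim_xi].
- apply filterlim_Rmult; [apply filterlim_Rsqr, filterlim_at_right_id | apply filterlim_const].
Qed.

Lemma filterlim_scaled_green_b :
  filterlim (fun h => h ^ 2 * B h) (at_right 0) (locally (2 * Om ^ 2)).
Proof.
apply (filterlim_ext_loc (fun h => 2 * Om ^ 2 / xi beta h)).
{ generalize at_right_pos. apply filter_imp. intros h Hh.
  assert (xi beta h <> 0) by (apply Rgt_not_eq, xi_pos).
  unfold B, green_b, lattice_scale, om0. field; lra. }
apply (filterlim_limit_eq _ (2 * Om ^ 2 / 1)); [field|].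
apply filterlim_Rdiv; [lra | apply filterlim_const | apply filterlim_xi].
Qed.

End GreenCoefficients.

Lemma RtoC_quadratic (A B r : R) : B * r * r - 2 * A * r + B = 0 ->
  (RtoC B * RtoC r * RtoC r - RtoC 2 * RtoC A * RtoC r + RtoC B = 0)%C.
Proof.
intros H. unfold Cminus, Cplus, Copp, Cmult, RtoC; simpl.
apply injective_projections; simpl; [|ring].
transitivity (B * r * r - 2 * A * r + B); [ring | exact H].
Qed.

Lemma sqrt_scaled (k y : R) : 0 <= k -> 0 <= y -> sqrt (k ^ 2 * y) = k * sqrt y.
Proof. intros. rewrite sqrt_mult, sqrt_pow2; auto. apply pow2_ge_0. Qed.

Lemma filterlim_abs_index (n : R -> Z) (l : R) :
  filterlim (fun h => IZR (n h) * h) (at_right 0) (locally l) ->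
  filterlim (fun h => INR (Z.abs_nat (n h)) * h) (at_right 0) (locally (Rabs l)).
Proof.
intros Hn. apply (filterlim_ext_loc (fun h => Rabs (IZR (n h) * h))).
- generalize at_right_pos. apply filter_imp. intros h Hh.
  rewrite INR_IZR_INZ, Zabs2Nat.id_abs, abs_IZR, Rabs_mult, (Rabs_pos_eq h); lra.
- apply filterlim_Rabs_comp, Hn.
Qed.

Definition small_root (A B : R) : R := (A - sqrt (A ^ 2 - B ^ 2)) / B.

Lemma small_root_spec A B : 0 < B < A ->
  0 < small_root A B < 1 /\
  B * small_root A B * small_root A B - 2 * A * small_root A B + B = 0 /\
  A - B * small_root A B = sqrt (A ^ 2 - B ^ 2).
Proof.
intros HAB. unfold small_root.
assert (HS2 : sqrt (A ^ 2 - B ^ 2) ^ 2 = A ^ 2 - B ^ 2) by (apply pow2_sqrt; nra).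
assert (HS0 := sqrt_pos (A ^ 2 - B ^ 2)).
set (S := sqrt (A ^ 2 - B ^ 2)) in *.
assert (HSA : S < A) by nra.
assert (HSB : A - B < S) by nra.
split; [split|split].
- apply Rdiv_lt_0_compat; lra.
- apply (Rmult_lt_reg_r B); [lra|]. field_simplify; lra.
- field_simplify; [|lra]. rewrite HS2. field. lra.
- field. lra.
Qed.

Lemma sqrt_product_limit (Om u : R) : 0 < Om -> 0 < u ->
  sqrt ((Om ^ 2 * u) * (4 * Om ^ 2)) = 2 * Om ^ 2 * sqrt u.
Proof.
intros HOm Hu. replace ((Om ^ 2 * u) * (4 * Om ^ 2)) with ((2 * Om ^ 2) ^ 2 * u) by ring.
apply sqrt_scaled; [nra | lra].
Qed.

Section BelowBand.
Variables (Om beta om : R).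
Hypothesis HOm : 0 < Om.
Hypothesis Hom : 0 <= om < beta * Om.

Let A := green_a_real Om beta om.
Let B := green_b Om beta.
Let s := sqrt (beta ^ 2 - om ^ 2 / Om ^ 2).
Let root h := small_root (A h) (B h).
Let disc h := h * sqrt (A h ^ 2 - B h ^ 2).

Lemma below_band_gap : Om ^ 2 * beta ^ 2 - om ^ 2 = Om ^ 2 * (beta ^ 2 - om ^ 2 / Om ^ 2).
Proof. field. lra. Qed.

Lemma below_band_arg_pos : 0 < beta ^ 2 - om ^ 2 / Om ^ 2.
Proof.
assert (om ^ 2 < (beta * Om) ^ 2) by nra.
apply (Rmult_lt_reg_l (Om ^ 2)); [nra|]. rewrite <- below_band_gap. nra.
Qed.

Lemma eventually_below_band : at_right 0 (fun h => 0 < h /\ 0 < B h < A h).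
Proof.
assert (Hgap := filterlim_eventually_gt _ _ 0 (filterlim_green_gap Om beta om)).
generalize (filter_and _ _ at_right_pos (Hgap ltac:(rewrite below_band_gap;
  apply Rmult_lt_0_compat; [nra | apply below_band_arg_pos]))).
apply filter_imp. intros h [Hh Hg]. fold (A h) (B h) in Hg.
assert (0 < B h) by (apply green_b_pos; auto). lra.
Qed.

Lemma filterlim_disc : filterlim disc (at_right 0) (locally (2 * Om ^ 2 * s)).
Proof.
apply (filterlim_ext_loc (fun h => sqrt ((A h - B h) * (h ^ 2 * (A h + B h))))).
{ generalize eventually_below_band. apply filter_imp. intros h [Hh HB].
  unfold disc. rewrite <- sqrt_scaled by nra. f_equal. ring. }
unfold s. rewrite <- sqrt_product_limit by (auto; apply below_band_arg_pos).
rewrite <- below_band_gap.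
apply filterlim_sqrt.
{ rewrite below_band_gap. generalize below_band_arg_pos. intros.
  apply Rmult_lt_0_compat; [apply Rmult_lt_0_compat|]; nra. }
apply filterlim_Rmult; [apply filterlim_green_gap | apply filterlim_scaled_green_sum].
Qed.

Lemma filterlim_root_defect : filterlim (fun h => (1 - root h) / h) (at_right 0) (locally s).
Proof.
apply (filterlim_ext_loc (fun h => (disc h - h * (A h - B h)) / (h ^ 2 * B h))).
{ generalize eventually_below_band. apply filter_imp. intros h [Hh HB].
  unfold root, disc, small_root. field. lra. }
assert (Hs : 0 < s) by apply sqrt_lt_R0, below_band_arg_pos.
apply (filterlim_limit_eq _ ((2 * Om ^ 2 * s - 0 * (Om ^ 2 * beta ^ 2 - om ^ 2)) / (2 * Om ^ 2)));
  [field; lra|].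
apply filterlim_Rdiv; [nra | | apply filterlim_scaled_green_b].
apply filterlim_Rminus; [apply filterlim_disc|].
apply filterlim_Rmult; [apply filterlim_at_right_id | apply filterlim_green_gap].
Qed.

Lemma filterlim_log_root : filterlim (fun h => ln (root h) / h) (at_right 0) (locally (- s)).
Proof.
set (y := fun h => root h - 1).
assert (Hy : filterlim y (at_right 0) (locally 0)).
{ apply (filterlim_ext_loc (fun h => - (h * ((1 - root h) / h)))).
  - generalize at_right_pos. apply filter_imp. intros h Hh. unfold y. field. lra.
  - apply (filterlim_limit_eq _ (- (0 * s))); [ring|].
    apply filterlim_Ropp, filterlim_Rmult;
      [apply filterlim_at_right_id | apply filterlim_root_defect]. }
assert (Hyn : at_right 0 (fun h => y h <> 0)).
{ generalize eventually_below_band. apply filter_imp. intros h [_ HB].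
  destruct (small_root_spec _ _ HB) as [Hr _]. unfold y, root. lra. }
apply (filterlim_ext_loc (fun h => ln (1 + y h) / y h * - ((1 - root h) / h))).
{ generalize (filter_and _ _ at_right_pos Hyn). apply filter_imp. intros h [Hh Hn0].
  unfold y in *. replace (1 + (root h - 1)) with (root h) by ring. field. lra. }
apply (filterlim_limit_eq _ (1 * - s)); [ring|].
apply filterlim_Rmult; [|apply filterlim_Ropp, filterlim_root_defect].
apply (filterlim_difference_quotient (fun t => ln (1 + t)) 1 y); auto.
- rewrite Rplus_0_r. apply ln_1.
- apply is_derive_Reals. auto_derive; [lra | field].
Qed.

Lemma Gh_below_band h n : 0 < h -> 0 < B h < A h ->
  (RtoC (/ h) * Gh Om beta h n (RtoC om))%C = RtoC (root h ^ Z.abs_nat n / disc h).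
Proof.
intros Hh HB.
destruct (small_root_spec _ _ HB) as [Hr [Hroot Hden]].
change (small_root (A h) (B h)) with (root h) in *.
assert (Hdisc : 0 < sqrt (A h ^ 2 - B h ^ 2)) by (apply sqrt_lt_R0; nra).
rewrite Gh_lattice_integral, green_a_RtoC, (lattice_integral_closed_form _ _ (RtoC (root h))).
all: change (green_a_real Om beta om h) with (A h); change (green_b Om beta h) with (B h).
- rewrite Cpow_RtoC, <- RtoC_mult, <- RtoC_minus, Hden, <- RtoC_div, <- RtoC_mult by lra.
  f_equal. unfold disc. field. lra.
- apply RtoC_neq_0. lra.
- rewrite Cmod_R, Rabs_pos_eq; lra.
- apply RtoC_quadratic, Hroot.
Qed.

Theorem green_limit_below_band (x : R) (n : R -> Z) :
  filterlim (fun h => IZR (n h) * h) (at_right 0) (locally (Rabs x)) ->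
  filterlim (fun h => (RtoC (/ h) * Gh Om beta h (n h) (RtoC om))%C)
    (at_right 0) (locally (gcont Om beta (Rabs x) om)).
Proof.
intros Hn. unfold gcont. destruct (Rlt_dec om (beta * Om)) as [_|]; [|lra]. fold s.
assert (Hs : 0 < s) by apply sqrt_lt_R0, below_band_arg_pos.
apply (filterlim_ext_loc (fun h => RtoC (root h ^ Z.abs_nat (n h) / disc h))).
{ generalize eventually_below_band. apply filter_imp. intros h [Hh HB].
  symmetry. apply Gh_below_band; auto. }
apply filterlim_RtoC.
apply (filterlim_ext_loc (fun h => exp (INR (Z.abs_nat (n h)) * h * (ln (root h) / h)) / disc h)).
{ generalize eventually_below_band. apply filter_imp. intros h [Hh HB].
  destruct (small_root_spec _ _ HB) as [Hr _]. change (small_root (A h) (B h)) with (root h) in Hr.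
  rewrite <- (Rpower_pow _ (root h)) by lra. unfold Rpower. do 2 f_equal. field. lra. }
assert (Hlim : 0 < 2 * Om ^ 2 * s) by (apply Rmult_lt_0_compat; nra).
apply (filterlim_limit_eq _ (exp (Rabs x * - s) / (2 * Om ^ 2 * s)));
  [replace (- Rabs x * s) with (Rabs x * - s) by ring; field; lra|].
apply filterlim_Rdiv; [lra | | apply filterlim_disc].
apply (filterlim_comp_derivable _ exp); [auto_derive; auto|].
rewrite <- (Rabs_Rabsolu x).
apply filterlim_Rmult; [apply filterlim_abs_index, Hn | apply filterlim_log_root].
Qed.

End BelowBand.

Definition csqrt_re (p q : R) : R := sqrt ((sqrt (p ^ 2 + q ^ 2) + p) / 2).
Definition csqrt_im (p q : R) : R := q / (2 * csqrt_re p q).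

Lemma csqrt_spec p q : q <> 0 \/ 0 < p ->
  0 < csqrt_re p q /\ csqrt_re p q ^ 2 - csqrt_im p q ^ 2 = p /\
  2 * csqrt_re p q * csqrt_im p q = q.
Proof.
intros Hpq.
assert (Hm2 : sqrt (p ^ 2 + q ^ 2) ^ 2 = p ^ 2 + q ^ 2) by (apply pow2_sqrt; nra).
assert (Hm0 := sqrt_pos (p ^ 2 + q ^ 2)).
set (m := sqrt (p ^ 2 + q ^ 2)) in *.
assert (Hmp : 0 < m + p).
{ destruct (Rlt_dec 0 p); [lra|]. destruct Hpq as [Hq | Hp]; [|lra].
  assert (0 < q ^ 2) by (apply pow2_gt_0; auto).
  assert (- p < m); [|lra].
  apply Rsqr_incrst_0; unfold Rsqr; nra. }
assert (Hu2 : csqrt_re p q ^ 2 = (m + p) / 2) by (apply pow2_sqrt; fold m; lra).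
assert (Hu : 0 < csqrt_re p q) by (apply sqrt_lt_R0; fold m; lra).
unfold csqrt_im. split; [|split]; auto.
- apply (Rmult_eq_reg_r (4 * csqrt_re p q ^ 2)); [|nra].
  field_simplify; [|lra]. rewrite Hu2. field_simplify. nra.
- field. lra.
Qed.

Lemma filterlim_csqrt {T} {F : (T -> Prop) -> Prop} {FF : Filter F} (p q : T -> R) p0 :
  0 < p0 -> filterlim p F (locally p0) -> filterlim q F (locally 0) ->
  filterlim (fun t => csqrt_re (p t) (q t)) F (locally (sqrt p0)) /\
  filterlim (fun t => csqrt_im (p t) (q t)) F (locally 0).
Proof.
intros Hp0 Hp Hq.
assert (Hm : filterlim (fun t => sqrt (p t ^ 2 + q t ^ 2)) F (locally p0)).
{ apply (filterlim_limit_eq _ (sqrt (p0 ^ 2 + 0 ^ 2))).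
  - replace (p0 ^ 2 + 0 ^ 2) with (p0 ^ 2) by ring. apply sqrt_pow2. lra.
  - apply filterlim_sqrt; [nra|]. apply filterlim_Rplus; apply filterlim_Rsqr; auto. }
assert (Hu : filterlim (fun t => csqrt_re (p t) (q t)) F (locally (sqrt p0))).
{ unfold csqrt_re. apply (filterlim_limit_eq _ (sqrt ((p0 + p0) / 2))); [f_equal; field|].
  apply filterlim_sqrt; [lra|].
  apply filterlim_Rdiv; [lra | apply filterlim_Rplus; auto | apply filterlim_const]. }
split; auto.
unfold csqrt_im. apply (filterlim_limit_eq _ (0 / (2 * sqrt p0))); [field|];
  assert (0 < sqrt p0) by (apply sqrt_lt_R0; auto); [lra|].
apply filterlim_Rdiv; [lra | auto |].
apply filterlim_Rmult; [apply filterlim_const | auto].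
Qed.

(* For [z = al - i ga], the roots of [r^2 - 2 z r + 1 = 0] are [z -+ i sqrt (1 - z^2)]. *)
Definition upper_root (al ga : R) : C :=
  let p := 1 - al ^ 2 + ga ^ 2 in let q := 2 * al * ga in
  (al - csqrt_im p q, csqrt_re p q - ga).

Lemma upper_root_spec al ga : 0 < ga ->
  let r := upper_root al ga in
  fst r ^ 2 - snd r ^ 2 - 2 * (al * fst r + ga * snd r) + 1 = 0 /\
  2 * fst r * snd r - 2 * (al * snd r - ga * fst r) = 0 /\
  fst r ^ 2 + snd r ^ 2 < 1.
Proof.
intros Hg r.
assert (Hpq : 2 * al * ga <> 0 \/ 0 < 1 - al ^ 2 + ga ^ 2).
{ destruct (Req_dec al 0) as [->|Ha]; [right; nra | left].
  apply Rmult_integral_contrapositive; split; [|lra].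
  apply Rmult_integral_contrapositive; split; lra. }
destruct (csqrt_spec _ _ Hpq) as [Hu [H1 H2]].
unfold r, upper_root; cbn [fst snd].
set (u := csqrt_re (1 - al ^ 2 + ga ^ 2) (2 * al * ga)) in *.
set (v := csqrt_im (1 - al ^ 2 + ga ^ 2) (2 * al * ga)) in *.
assert (Huv : u * v = al * ga) by lra.
split; [nra | split; [nra|]].
assert (E4 : u ^ 2 * (u ^ 2 - ga ^ 2) = u ^ 2 * (1 - al ^ 2) + al ^ 2 * ga ^ 2).
{ replace (al ^ 2 * ga ^ 2) with ((u * v) ^ 2) by (rewrite Huv; ring).
  replace (u ^ 2 * (u ^ 2 - ga ^ 2)) with (u ^ 2 * (u ^ 2 - v ^ 2) + (u * v) ^ 2 - u ^ 2 * ga ^ 2)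
    by ring.
  rewrite H1. ring. }
(* [ga (|r|^2 - 1) = 2 (ga - u) (v^2 + ga^2)], and [ga < u] because
   [u^2 (u^2 - ga^2) = u^2 (1 - al^2) + al^2 ga^2]. *)
assert (Hug : ga < u).
{ destruct (Rlt_dec ga u) as [|Hn]; auto. exfalso.
  assert (u ^ 2 <= ga ^ 2) by nra.
  assert (0 < u ^ 2) by nra.
  assert (u ^ 2 * (u ^ 2 - ga ^ 2) <= 0) by nra.
  assert (0 <= al ^ 2 * (ga ^ 2 - u ^ 2)) by nra.
  nra. }
assert (E : ga * ((al - v) ^ 2 + (u - ga) ^ 2 - 1) = 2 * (ga - u) * (v ^ 2 + ga ^ 2)).
{ apply Rminus_diag_uniq.
  transitivity (ga * (u ^ 2 - v ^ 2 - (1 - al ^ 2 + ga ^ 2)) - 2 * v * (al * ga - u * v));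
    [ring | rewrite H1, Huv; ring]. }
assert (2 * (ga - u) * (v ^ 2 + ga ^ 2) < 0) by (assert (0 < v ^ 2 + ga ^ 2) by nra; nra).
nra.
Qed.

Definition unit_root (a0 : R) : C := (a0, sqrt (1 - a0 ^ 2)).

Definition band_limit (A B : R) (n : Z) : C :=
  (Cpow (unit_root (A / B)) (Z.abs_nat n) / (RtoC A - RtoC B * unit_root (A / B)))%C.

Lemma filterlim_upper_root {T} {F : (T -> Prop) -> Prop} {FF : Filter F} (al ga : T -> R) a0 :
  -1 < a0 < 1 -> filterlim al F (locally a0) -> filterlim ga F (locally 0) ->
  filterlim (fun t => upper_root (al t) (ga t)) F (locally (unit_root a0)).
Proof.
intros Ha Hal Hga.
assert (Hp : filterlim (fun t => 1 - al t ^ 2 + ga t ^ 2) F (locally (1 - a0 ^ 2))).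
{ apply (filterlim_limit_eq _ (1 - a0 ^ 2 + 0 ^ 2)); [ring|].
  apply filterlim_Rplus; [apply filterlim_Rminus; [apply filterlim_const|] |];
    apply filterlim_Rsqr; auto. }
assert (Hq : filterlim (fun t => 2 * al t * ga t) F (locally 0)).
{ apply (filterlim_limit_eq _ (2 * a0 * 0)); [ring|].
  apply filterlim_Rmult; auto. apply filterlim_Rmult; auto. apply filterlim_const. }
assert (Hp0 : 0 < 1 - a0 ^ 2) by nra.
destruct (filterlim_csqrt _ _ _ Hp0 Hp Hq) as [Hu Hv].
apply filterlim_C; unfold upper_root, unit_root; cbn [fst snd].
- apply (filterlim_limit_eq _ (a0 - 0)); [ring | apply filterlim_Rminus; auto].
- apply (filterlim_limit_eq _ (sqrt (1 - a0 ^ 2) - 0)); [ring | apply filterlim_Rminus; auto].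
Qed.

Section EpsilonLimit.
Variables (Om beta om h : R) (n : Z).
Hypothesis Hom : 0 < om.

Let A := green_a_real Om beta om h.
Let B := green_b Om beta h.
Hypothesis HAB : - B < A < B.

(* [green_a (om, eps) / B = al - i ga] with [ga > 0] for [eps > 0]. *)
Let eps_root eps := upper_root ((A + eps ^ 2) / B) (2 * om * eps / B).

Lemma Gh_eps_closed_form eps : 0 < eps ->
  Gh Om beta h n (om, eps)
  = (Cpow (eps_root eps) (Z.abs_nat n) / (green_a Om beta h (om, eps) - RtoC B * eps_root eps))%C.
Proof.
intros He. assert (HB : 0 < B) by lra.
assert (Hg : 0 < 2 * om * eps / B) by (apply Rdiv_lt_0_compat; nra).
destruct (upper_root_spec ((A + eps ^ 2) / B) _ Hg) as [E1 [E2 Hmod]].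
fold (eps_root eps) in E1, E2, Hmod.
rewrite Gh_lattice_integral. apply lattice_integral_closed_form.
- apply RtoC_neq_0. lra.
- unfold Cmod. rewrite <- sqrt_1. apply sqrt_lt_1_alt. nra.
- rewrite green_a_shift. fold A.
  unfold Cminus, Cplus, Copp, Cmult, RtoC. apply injective_projections; cbn [fst snd].
  + transitivity (B * (fst (eps_root eps) ^ 2 - snd (eps_root eps) ^ 2
       - 2 * ((A + eps ^ 2) / B * fst (eps_root eps) + 2 * om * eps / B * snd (eps_root eps)) + 1));
      [field; lra | rewrite E1; ring].
  + transitivity (B * (2 * fst (eps_root eps) * snd (eps_root eps)
       - 2 * ((A + eps ^ 2) / B * snd (eps_root eps) - 2 * om * eps / B * fst (eps_root eps))));
      [field; lra | rewrite E2; ring].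
Qed.

Lemma filterlim_Gh_eps :
  filterlim (fun eps => Gh Om beta h n (om, eps)) (at_right 0)
    (locally (band_limit A B n)).
Proof.
assert (HB : 0 < B) by lra.
assert (Ha0 : -1 < A / B < 1).
{ split; apply (Rmult_lt_reg_r B); auto; unfold Rdiv; rewrite Rmult_assoc, Rinv_l, Rmult_1_r; lra. }
apply (filterlim_ext_loc (fun eps => Cpow (eps_root eps) (Z.abs_nat n)
                           / (green_a Om beta h (om, eps) - RtoC B * eps_root eps))%C).
{ generalize at_right_pos. apply filter_imp. intros e He. symmetry. apply Gh_eps_closed_form, He. }
assert (Hr : filterlim eps_root (at_right 0) (locally (unit_root (A / B)))).
{ apply filterlim_upper_root; auto.
  - apply (filterlim_limit_eq _ ((A + 0 ^ 2) / B)); [unfold Rdiv; ring|].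
    apply filterlim_Rdiv; [lra | | apply filterlim_const].
    apply filterlim_Rplus; [apply filterlim_const | apply filterlim_Rsqr, filterlim_at_right_id].
  - apply (filterlim_limit_eq _ (2 * om * 0 / B)); [field; lra|].
    apply filterlim_Rdiv; [lra | | apply filterlim_const].
    apply filterlim_Rmult; [apply filterlim_const | apply filterlim_at_right_id]. }
unfold band_limit. apply filterlim_Cdiv; [| apply filterlim_Cpow, Hr |].
- intro E. unfold unit_root, Cminus, Cplus, Copp, Cmult, RtoC in E. injection E as _ E2.
  assert (0 < sqrt (1 - A / B * (A / B * 1))) by (apply sqrt_lt_R0; nra). nra.
- apply filterlim_Cminus; [|apply filterlim_Cmult; [apply filterlim_const | apply Hr]].
  apply (filterlim_ext (fun eps => ((A + eps ^ 2, - (2 * om * eps)) : C))).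
  { intros; rewrite green_a_shift; reflexivity. }
  apply filterlim_C; unfold RtoC; cbn [fst snd].
  + apply (filterlim_limit_eq _ (A + 0 ^ 2)); [ring|].
    apply filterlim_Rplus; [apply filterlim_const | apply filterlim_Rsqr, filterlim_at_right_id].
  + apply (filterlim_limit_eq _ (- (2 * om * 0))); [ring|].
    apply filterlim_Ropp, filterlim_Rmult; [apply filterlim_const | apply filterlim_at_right_id].
Qed.

End EpsilonLimit.

Lemma derivable_pt_lim_asin_0 : derivable_pt_lim asin 0 1.
Proof.
apply (derive_pt_eq_1 _ _ _ (derivable_pt_asin 0 ltac:(lra))).
rewrite derive_pt_asin. unfold Rsqr. rewrite Rmult_0_r, Rminus_0_r, sqrt_1. field.
Qed.

Section AboveBand.
Variables (Om beta om : R).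
Hypothesis HOm : 0 < Om.
Hypothesis Hbeta : 0 < beta.
Hypothesis Hom : beta * Om < om.

Let A := green_a_real Om beta om.
Let B := green_b Om beta.
Let s := sqrt (om ^ 2 / Om ^ 2 - beta ^ 2).
Let disc h := h * sqrt (B h ^ 2 - A h ^ 2).
Let height h := sqrt (1 - (A h / B h) ^ 2).
Let angle h := asin (height h).

Lemma above_band_gap : Om ^ 2 * beta ^ 2 - om ^ 2 < 0.
Proof. assert (0 < beta * Om) by nra. nra. Qed.

Lemma above_band_arg_pos : 0 < om ^ 2 / Om ^ 2 - beta ^ 2.
Proof.
generalize above_band_gap. intros. apply (Rmult_lt_reg_l (Om ^ 2)); [nra|].
replace (Om ^ 2 * (om ^ 2 / Om ^ 2 - beta ^ 2)) with (om ^ 2 - Om ^ 2 * beta ^ 2) by (field; lra).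
lra.
Qed.

Lemma filterlim_green_ratio : filterlim (fun h => A h / B h) (at_right 0) (locally 1).
Proof.
apply (filterlim_ext_loc (fun h => 1 + (A h - B h) * h ^ 2 / (h ^ 2 * B h))).
{ generalize at_right_pos. apply filter_imp. intros h Hh.
  assert (0 < B h) by (apply green_b_pos; auto). field. lra. }
apply (filterlim_limit_eq _ (1 + (Om ^ 2 * beta ^ 2 - om ^ 2) * 0 ^ 2 / (2 * Om ^ 2)));
  [field; lra|].
apply filterlim_Rplus; [apply filterlim_const|].
apply filterlim_Rdiv; [nra | | apply filterlim_scaled_green_b].
apply filterlim_Rmult; [apply filterlim_green_gap | apply filterlim_Rsqr, filterlim_at_right_id].
Qed.

Lemma eventually_above_band : at_right 0 (fun h => 0 < h /\ 0 < A h < B h).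
Proof.
assert (Hgap := filterlim_eventually_lt _ _ 0 (filterlim_green_gap Om beta om)).
assert (Hratio := filterlim_eventually_gt _ _ 0 filterlim_green_ratio).
generalize (filter_and _ _ at_right_pos
  (filter_and _ _ (Hgap above_band_gap) (Hratio ltac:(lra)))).
apply filter_imp. intros h [Hh [Hg Hr]]. fold (A h) (B h) in Hg, Hr.
assert (0 < B h) by (apply green_b_pos; auto).
split; auto. split; [|lra].
apply (Rmult_lt_reg_r (/ B h)); [apply Rinv_0_lt_compat; auto | lra].
Qed.

Lemma filterlim_disc_above : filterlim disc (at_right 0) (locally (2 * Om ^ 2 * s)).
Proof.
apply (filterlim_ext_loc (fun h => sqrt ((B h - A h) * (h ^ 2 * (A h + B h))))).
{ generalize eventually_above_band. apply filter_imp. intros h [Hh HB].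
  unfold disc. rewrite <- sqrt_scaled by nra. f_equal. ring. }
assert (Hu := above_band_arg_pos).
unfold s. rewrite <- sqrt_product_limit by auto.
apply filterlim_sqrt; [apply Rmult_lt_0_compat; [apply Rmult_lt_0_compat|]; nra|].
apply filterlim_Rmult; [|apply filterlim_scaled_green_sum].
apply (filterlim_limit_eq _ (- (Om ^ 2 * beta ^ 2 - om ^ 2))); [field; lra|].
apply (filterlim_ext (fun h => - (A h - B h))); [intros; ring|].
apply filterlim_Ropp, filterlim_green_gap.
Qed.

Lemma height_scaled h : 0 < h -> 0 < A h < B h -> h * B h * height h = disc h.
Proof.
intros Hh HB. unfold height, disc.
assert (Ha0 : 0 < A h / B h < 1).
{ split; [apply Rdiv_lt_0_compat; lra|].
  apply (Rmult_lt_reg_r (B h)); [lra | unfold Rdiv; rewrite Rmult_assoc, Rinv_l; lra]. }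
replace (B h ^ 2 - A h ^ 2) with (B h ^ 2 * (1 - (A h / B h) ^ 2)) by (field; lra).
rewrite sqrt_scaled by nra. ring.
Qed.

Lemma filterlim_height_rate : filterlim (fun h => height h / h) (at_right 0) (locally s).
Proof.
apply (filterlim_ext_loc (fun h => disc h / (h ^ 2 * B h))).
{ generalize eventually_above_band. apply filter_imp. intros h [Hh HB].
  rewrite <- height_scaled by auto. field. lra. }
apply (filterlim_limit_eq _ (2 * Om ^ 2 * s / (2 * Om ^ 2))); [field; lra|].
apply filterlim_Rdiv; [nra | apply filterlim_disc_above | apply filterlim_scaled_green_b].
Qed.

Lemma height_pos h : 0 < h -> 0 < A h < B h -> 0 < height h.
Proof.
intros Hh HB. apply (Rmult_lt_reg_l (h * B h)); [nra|].
rewrite height_scaled, Rmult_0_r by auto.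
unfold disc. apply Rmult_lt_0_compat; [lra | apply sqrt_lt_R0; nra].
Qed.

Lemma filterlim_angle_rate : filterlim (fun h => angle h / h) (at_right 0) (locally s).
Proof.
assert (Hpos : at_right 0 (fun h => 0 < h /\ 0 < height h)).
{ generalize eventually_above_band. apply filter_imp. intros h [Hh HB]. split; auto.
  apply height_pos; auto. }
apply (filterlim_ext_loc (fun h => asin (height h) / height h * (height h / h))).
{ generalize Hpos. apply filter_imp. intros h [Hh Hy]. unfold angle. field. lra. }
apply (filterlim_limit_eq _ (1 * s)); [ring|].
apply filterlim_Rmult; [|apply filterlim_height_rate].
apply (filterlim_difference_quotient asin 1 height);
  [apply asin_0 | apply derivable_pt_lim_asin_0 | |].
- apply (filterlim_ext_loc (fun h => h * (height h / h))).
  + generalize at_right_pos. apply filter_imp. intros h Hh. field. lra.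
  + apply (filterlim_limit_eq _ (0 * s)); [ring|].
    apply filterlim_Rmult; [apply filterlim_at_right_id | apply filterlim_height_rate].
- generalize Hpos. apply filter_imp. intros h [_ Hy]. lra.
Qed.

Lemma cexpi_angle h : 0 < h -> 0 < A h < B h -> cexpi (angle h) = unit_root (A h / B h).
Proof.
intros Hh HB.
assert (Ha0 : 0 < A h / B h < 1).
{ split; [apply Rdiv_lt_0_compat; lra|].
  apply (Rmult_lt_reg_r (B h)); [lra | unfold Rdiv; rewrite Rmult_assoc, Rinv_l; lra]. }
assert (Hy2 : height h ^ 2 = 1 - (A h / B h) ^ 2) by (apply pow2_sqrt; nra).
assert (Hy0 := sqrt_pos (1 - (A h / B h) ^ 2)). fold (height h) in Hy0.
unfold angle, cexpi, unit_root. fold (height h).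
rewrite sin_asin, cos_asin by nra. f_equal. unfold Rsqr.
replace (1 - height h * height h) with ((A h / B h) ^ 2) by nra.
apply sqrt_pow2. lra.
Qed.

Lemma band_limit_scaled h n : 0 < h -> 0 < A h < B h ->
  (RtoC (/ h) * band_limit (A h) (B h) n)%C
  = (Ci * cexpi (INR (Z.abs_nat n) * angle h) / RtoC (disc h))%C.
Proof.
intros Hh HB. assert (Hc := cexpi_angle h Hh HB). assert (Hy := height_pos h Hh HB).
unfold band_limit. rewrite <- Hc, Cpow_cexpi, <- height_scaled by auto.
unfold cexpi, unit_root in Hc. injection Hc as Hcos Hsin.
replace (sqrt (1 - A h / B h * (A h / B h * 1))) with (height h) in Hsin
  by (unfold height; f_equal; ring).
replace (RtoC (A h) - RtoC (B h) * cexpi (angle h))%C with ((0, - (B h * height h)) : C).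
- assert (Hb : 0 < B h) by lra. revert Hb Hy.
  unfold Cdiv, Cinv, Cmult, Ci, RtoC, cexpi.
  generalize (B h) (height h) (INR (Z.abs_nat n) * angle h). intros b y t Hb Hy.
  apply injective_projections; cbn [fst snd]; field; nra.
- unfold cexpi, Cminus, Cplus, Copp, Cmult, RtoC.
  apply injective_projections; cbn [fst snd]; rewrite ?Hcos, ?Hsin; [field; lra | ring].
Qed.

Theorem green_limit_above_band (x : R) (n : R -> Z) :
  filterlim (fun h => IZR (n h) * h) (at_right 0) (locally (Rabs x)) ->
  exists L : R -> C,
    (exists d : R, 0 < d /\ forall h, 0 < h < d ->
       filterlim (fun eps => Gh Om beta h (n h) (om, eps)) (at_right 0) (locally (L h))) /\
    filterlim (fun h => (RtoC (/ h) * L h)%C) (at_right 0) (locally (gcont Om beta (Rabs x) om)).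
Proof.
intros Hn. exists (fun h => band_limit (A h) (B h) (n h)). split.
- destruct eventually_above_band as [d Hd]. exists d. split; [apply cond_pos|].
  intros h [Hh Hhd].
  assert (HB : 0 < A h < B h).
  { apply Hd; auto. change (Rabs (h - 0) < d). rewrite Rminus_0_r, Rabs_pos_eq; lra. }
  apply filterlim_Gh_eps; auto.
  + assert (0 < beta * Om) by nra. lra.
  + change (- B h < A h < B h). lra.
- apply (filterlim_ext_loc
           (fun h => Ci * cexpi (INR (Z.abs_nat (n h)) * angle h) / RtoC (disc h))%C).
  { generalize eventually_above_band. apply filter_imp. intros h [Hh HB].
    symmetry. apply band_limit_scaled; auto. }
  unfold gcont. destruct (Rlt_dec om (beta * Om)) as [|_]; [lra|]. fold s.
  assert (Hs : 0 < s) by apply sqrt_lt_R0, above_band_arg_pos.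
  replace (Ci * RtoC (/ (2 * Om ^ 2)) * (cexpi (Rabs x * s) / RtoC s))%C
    with (Ci * cexpi (Rabs x * s) / RtoC (2 * Om ^ 2 * s))%C.
  2: { rewrite RtoC_inv, !RtoC_mult by nra. field.
       split; apply RtoC_neq_0; nra. }
  assert (Hlim : 0 < 2 * Om ^ 2 * s) by (apply Rmult_lt_0_compat; nra).
  apply filterlim_Cdiv; [apply RtoC_neq_0; lra | | apply filterlim_RtoC, filterlim_disc_above].
  apply filterlim_Cmult; [apply filterlim_const|].
  apply filterlim_cexpi.
  apply (filterlim_ext_loc (fun h => INR (Z.abs_nat (n h)) * h * (angle h / h))).
  { generalize at_right_pos. apply filter_imp. intros h Hh. field. lra. }
  rewrite <- (Rabs_Rabsolu x).
  apply filterlim_Rmult; [apply filterlim_abs_index, Hn | apply filterlim_angle_rate].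
Qed.

End AboveBand.

Lemma is_derive_Rmult (f g : R -> R) x df dg :
  is_derive f x df -> is_derive g x dg -> is_derive (fun t => f t * g t) x (df * g x + f x * dg).
Proof. intros. apply (is_derive_mult f g); auto. intros; apply Rmult_comm. Qed.

Lemma is_derive_eq (f : R -> R) (x l l' : R) : is_derive f x l -> l = l' -> is_derive f x l'.
Proof. intros H ->; exact H. Qed.

Lemma is_derive_comp_opp (f : R -> R) x df :
  is_derive f (- x) df -> is_derive (fun t => f (- t)) x (- df).
Proof.
intros H. eapply is_derive_eq; [apply (is_derive_comp f Ropp); [exact H|] |].
- apply (is_derive_opp (fun t => t) x 1), (is_derive_id (K := R_AbsRing)).
- unfold scal; simpl; unfold mult, opp; simpl. ring.
Qed.

Lemma continuous_zero_of_accumulating_zeros (f : R -> R) a :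
  continuous f a -> (forall d, 0 < d -> exists y, Rabs (y - a) < d /\ f y = 0) -> f a = 0.
Proof.
intros Hc Hz. destruct (Req_dec (f a) 0) as [|Hn]; auto. exfalso.
assert (Hp : 0 < Rabs (f a)) by (apply Rabs_pos_lt; auto).
destruct (proj1 (filterlim_locally f (f a)) Hc (mkposreal _ Hp)) as [d Hd].
destruct (Hz d (cond_pos d)) as [y [Hy Hfy]].
specialize (Hd y Hy). change (Rabs (f y - f a) < Rabs (f a)) in Hd.
rewrite Hfy, Rminus_0_l, Rabs_Ropp in Hd. lra.
Qed.

Section RadialGreen.
Variables (G G1 : R -> R) (c : R) (phi : R -> R) (M : R).
Hypothesis HG : forall t, is_derive G t (G1 t).
Hypothesis HG1 : forall t, is_derive G1 t (- c * G t).
Hypothesis Hphi : forall m y, ex_derive_n phi m y.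
Hypothesis HM : 0 < M.
Hypothesis Hsupp : forall y, M < Rabs y -> phi y = 0.

Lemma is_derive_phi y : is_derive phi y (Derive phi y).
Proof. apply Derive_correct. exact (Hphi 1%nat y). Qed.

Lemma is_derive_Derive_phi y : is_derive (Derive phi) y (Derive_n phi 2 y).
Proof. apply (Derive_correct (Derive_n phi 1)). exact (Hphi 2%nat y). Qed.

Lemma continuous_Derive_n_phi m y : continuous (Derive_n phi m) y.
Proof. apply (ex_derive_continuous (Derive_n phi m)). exact (Hphi (S m) y). Qed.

Lemma Derive_phi_supp y : M < Rabs y -> Derive phi y = 0.
Proof.
intros Hy. rewrite (Derive_ext_loc phi (fun _ => 0)); [apply Derive_const|].
assert (Hp : 0 < Rabs y - M) by lra.
exists (mkposreal _ Hp). intros t Ht. apply Hsupp. change (Rabs (t - y) < Rabs y - M) in Ht.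
assert (Rabs y <= Rabs t + Rabs (y - t))
  by (replace y with (t + (y - t)) at 1 by ring; apply Rabs_triang).
rewrite Rabs_minus_sym in Ht. lra.
Qed.

(* The endpoints [-M] and [M] are [e * M] with [e = -1, 1]; [phi] and [phi'] vanish there by
   continuity from outside the support. *)
Lemma phi_boundary (m : nat) (e : R) : (m <= 1)%nat -> Rabs e = 1 -> Derive_n phi m (e * M) = 0.
Proof.
intros Hm He. apply continuous_zero_of_accumulating_zeros; [apply continuous_Derive_n_phi|].
intros d Hd. exists ((1 + d / (2 * M)) * (e * M)). split.
- replace ((1 + d / (2 * M)) * (e * M) - e * M) with (e * (d / 2)) by (field; lra).
  rewrite Rabs_mult, He, Rabs_pos_eq; lra.
- assert (Hy : M < Rabs ((1 + d / (2 * M)) * (e * M))).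
  { rewrite !Rabs_mult, He, (Rabs_pos_eq M), Rabs_pos_eq by
      (try lra; assert (0 < d / (2 * M)) by (apply Rdiv_lt_0_compat; lra); lra).
    assert (0 < d / (2 * M)) by (apply Rdiv_lt_0_compat; lra). nra. }
  destruct m as [|[|m]]; [apply Hsupp, Hy | apply Derive_phi_supp, Hy | lia].
Qed.

Lemma continuous_radial_integrand (H : R -> R) :
  (forall t, continuous H t) ->
  forall y, continuous (fun y => H y * (Derive_n phi 2 y + c * phi y)) y.
Proof.
intros HH y. apply (filterlim_Rmult (fun y => H y)); [apply HH|].
apply filterlim_Rplus; [apply (continuous_Derive_n_phi 2) | ].
apply filterlim_Rmult; [apply filterlim_const | apply (continuous_Derive_n_phi 0)].
Qed.

(* [G phi' - G' phi] is an antiderivative of the integrand because [G'' = - c G]. *)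
Lemma is_RInt_radial_green_right :
  is_RInt (fun y => G (Rabs y) * (Derive_n phi 2 y + c * phi y)) 0 M
    (- G 0 * Derive phi 0 + G1 0 * phi 0).
Proof.
apply (is_RInt_ext (fun y => G y * (Derive_n phi 2 y + c * phi y))).
{ intros y Hy. rewrite Rmin_left, Rmax_right in Hy by lra. rewrite Rabs_pos_eq; lra. }
apply (is_RInt_R_derive (fun y => G y * Derive phi y - G1 y * phi y)).
- intros y. eapply is_derive_eq.
  + apply (is_derive_minus (V := R_NormedModule)); apply is_derive_Rmult;
      auto using is_derive_phi, is_derive_Derive_phi.
  + unfold minus, plus, opp; simpl. ring.
- apply continuous_radial_integrand. intros t.
  apply (ex_derive_continuous G). exists (G1 t). apply HG.
- assert (E1 := phi_boundary 0 1 ltac:(lia) Rabs_R1).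
  assert (E2 := phi_boundary 1 1 ltac:(lia) Rabs_R1).
  rewrite Rmult_1_l in E1, E2. change (phi M = 0) in E1. change (Derive phi M = 0) in E2.
  rewrite E1, E2. ring.
Qed.

Lemma is_RInt_radial_green_left :
  is_RInt (fun y => G (Rabs y) * (Derive_n phi 2 y + c * phi y)) (- M) 0
    (G 0 * Derive phi 0 + G1 0 * phi 0).
Proof.
apply (is_RInt_ext (fun y => G (- y) * (Derive_n phi 2 y + c * phi y))).
{ intros y Hy. rewrite Rmin_left, Rmax_right in Hy by lra. rewrite Rabs_left; lra. }
apply (is_RInt_R_derive (fun y => G (- y) * Derive phi y + G1 (- y) * phi y)).
- intros y. eapply is_derive_eq.
  + apply (is_derive_plus (V := R_NormedModule)); apply is_derive_Rmult;
      auto using is_derive_comp_opp, is_derive_phi, is_derive_Derive_phi.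
  + unfold plus; simpl. ring.
- apply continuous_radial_integrand. intros t.
  apply (filterlim_comp_derivable (fun t => - t) G); [exists (G1 (- t)); apply HG|].
  apply filterlim_Ropp, filterlim_id.
- assert (E1 := phi_boundary 0 (-1) ltac:(lia) ltac:(rewrite Rabs_left by lra; ring)).
  assert (E2 := phi_boundary 1 (-1) ltac:(lia) ltac:(rewrite Rabs_left by lra; ring)).
  replace (-1 * M) with (- M) in E1, E2 by ring.
  change (phi (- M) = 0) in E1. change (Derive phi (- M) = 0) in E2.
  rewrite E1, E2, Ropp_involutive, Ropp_0. ring.
Qed.

Lemma is_RInt_radial_green :
  is_RInt (fun y => G (Rabs y) * (Derive_n phi 2 y + c * phi y)) (- M) M (2 * G1 0 * phi 0).
Proof.
replace (2 * G1 0 * phi 0)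
  with (plus (G 0 * Derive phi 0 + G1 0 * phi 0) (- G 0 * Derive phi 0 + G1 0 * phi 0))
  by (unfold plus; simpl; ring).
exact (is_RInt_Chasles _ _ 0 _ _ _ is_RInt_radial_green_left is_RInt_radial_green_right).
Qed.

End RadialGreen.

Lemma is_RInt_radial_green_C (g : R -> C) (Gr Gr1 Gi Gi1 : R -> R) c K phi M :
  (forall t, is_derive Gr t (Gr1 t)) -> (forall t, is_derive Gr1 t (- c * Gr t)) ->
  (forall t, is_derive Gi t (Gi1 t)) -> (forall t, is_derive Gi1 t (- c * Gi t)) ->
  (forall y, g y = (Gr (Rabs y), Gi (Rabs y))) ->
  (forall m y, ex_derive_n phi m y) -> 0 < M -> (forall y, M < Rabs y -> phi y = 0) ->
  @is_RInt CV (fun y => (g y * RtoC (K * (Derive_n phi 2 y + c * phi y)))%C) (- M) M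
    (K * (2 * Gr1 0 * phi 0), K * (2 * Gi1 0 * phi 0)).
Proof.
intros HGr HGr1 HGi HGi1 Hg Hphi HM Hsupp. apply is_RInt_C.
- apply (is_RInt_ext (fun y => K * (Gr (Rabs y) * (Derive_n phi 2 y + c * phi y)))).
  { intros y _. rewrite Hg. unfold Cmult, RtoC; simpl. ring. }
  apply (is_RInt_scal (V := R_NormedModule)), is_RInt_radial_green; auto.
- apply (is_RInt_ext (fun y => K * (Gi (Rabs y) * (Derive_n phi 2 y + c * phi y)))).
  { intros y _. rewrite Hg. unfold Cmult, RtoC; simpl. ring. }
  apply (is_RInt_scal (V := R_NormedModule)), is_RInt_radial_green; auto.
Qed.

Lemma is_derive_zero t : is_derive (fun _ : R => 0) t 0.
Proof. auto_derive; auto. Qed.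

Section DistributionalEquation.
Variables (Om beta om : R) (phi : R -> R) (M : R).
Hypothesis HOm : 0 < Om.
Hypothesis Hphi : forall m y, ex_derive_n phi m y.
Hypothesis HM : 0 < M.
Hypothesis Hsupp : forall y, M < Rabs y -> phi y = 0.

Let c := om ^ 2 / Om ^ 2 - beta ^ 2.
Let green_operator_integral :=
  @RInt CV (fun y => (gcont Om beta (Rabs y) om
                      * RtoC (- Om ^ 2 * (Derive_n phi 2 y + c * phi y)))%C) (- M) M.

Lemma green_distribution_below_band : 0 <= om < beta * Om ->
  green_operator_integral = RtoC (phi 0).
Proof.
intros Hom. apply (@is_RInt_unique CV).
set (s := sqrt (beta ^ 2 - om ^ 2 / Om ^ 2)).
assert (Hs : 0 < s) by apply sqrt_lt_R0, (below_band_arg_pos Om beta om HOm Hom).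
assert (Hs2 : s * s = - c).
{ unfold s, c. rewrite sqrt_sqrt; [ring|].
  generalize (below_band_arg_pos Om beta om HOm Hom). lra. }
replace (RtoC (phi 0))
  with (- Om ^ 2 * (2 * (/ (2 * Om ^ 2) * - exp (- 0 * s)) * phi 0), - Om ^ 2 * (2 * 0 * phi 0)).
- apply (is_RInt_radial_green_C _ (fun t => / (2 * Om ^ 2) * (exp (- t * s) / s))
           (fun t => / (2 * Om ^ 2) * - exp (- t * s)) (fun _ => 0) (fun _ => 0)
           c (- Om ^ 2) phi M);
    [| | exact is_derive_zero | | | auto ..].
  + intros t. auto_derive; auto. field. split; lra.
  + intros t. auto_derive; auto. rewrite <- Hs2. field. lra.
  + intros t. eapply is_derive_eq; [apply is_derive_zero | ring].
  + intros y. unfold gcont. destruct (Rlt_dec om (beta * Om)); [reflexivity | lra].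
- unfold RtoC. f_equal; [|ring]. rewrite Ropp_0, Rmult_0_l, exp_0. field. lra.
Qed.

Lemma green_distribution_above_band : 0 < beta -> beta * Om < om ->
  green_operator_integral = RtoC (phi 0).
Proof.
intros Hbeta Hom. apply (@is_RInt_unique CV).
set (s := sqrt (om ^ 2 / Om ^ 2 - beta ^ 2)).
assert (Hs : 0 < s) by apply sqrt_lt_R0, (above_band_arg_pos Om beta om HOm Hbeta Hom).
assert (Hs2 : s * s = c).
{ unfold s, c. rewrite sqrt_sqrt; [ring|].
  generalize (above_band_arg_pos Om beta om HOm Hbeta Hom). lra. }
set (k := / (2 * Om ^ 2)).
replace (RtoC (phi 0))
  with (- Om ^ 2 * (2 * (- k * cos (0 * s)) * phi 0), - Om ^ 2 * (2 * (- k * sin (0 * s)) * phi 0)).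
- apply (is_RInt_radial_green_C _ (fun t => - k * (sin (t * s) / s)) (fun t => - k * cos (t * s))
           (fun t => k * (cos (t * s) / s)) (fun t => - k * sin (t * s)) c (- Om ^ 2) phi M);
    [| | | | | auto ..].
  + intros t. auto_derive; auto. field. lra.
  + intros t. auto_derive; auto. rewrite <- Hs2. field. lra.
  + intros t. auto_derive; auto. field. lra.
  + intros t. auto_derive; auto. rewrite <- Hs2. field. lra.
  + intros y. unfold gcont. destruct (Rlt_dec om (beta * Om)); [lra|]. fold s k.
    unfold Cmult, Cdiv, Cinv, Ci, RtoC, cexpi. apply injective_projections; simpl; field; lra.
- unfold k, RtoC. rewrite Rmult_0_l, cos_0, sin_0. f_equal; field; lra.
Qed.

End DistributionalEquation.

Theorem mainTheorem5 (Om beta x : R) (n : R -> Z) :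
  0 < Om -> 0 < beta ->
  filterlim (fun h => IZR (n h) * h) (at_right 0) (locally (Rabs x)) ->
  (forall om : R, 0 <= om < beta * Om ->
     filterlim (fun h => Cmult (RtoC (/ h)) (Gh Om beta h (n h) (RtoC om)))
       (at_right 0) (locally (gcont Om beta (Rabs x) om))) /\
  (forall om : R, beta * Om < om ->
     exists L : R -> C,
       (exists d : R, 0 < d /\ forall h, 0 < h < d ->
          filterlim (fun eps => Gh Om beta h (n h) (om, eps)) (at_right 0) (locally (L h))) /\
       filterlim (fun h => Cmult (RtoC (/ h)) (L h))
         (at_right 0) (locally (gcont Om beta (Rabs x) om))) /\
  (forall om : R, 0 <= om -> om <> beta * Om ->
     forall phi : R -> R, test_function phi ->
     forall M : R, 0 < M -> (forall y, M < Rabs y -> phi y = 0) ->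
       @RInt C_R_CompleteNormedModule
         (fun y => Cmult (gcont Om beta (Rabs y) om)
                     (RtoC (- Om ^ 2 * (Derive_n phi 2 y + (om ^ 2 / Om ^ 2 - beta ^ 2) * phi y))))
         (- M) M
       = RtoC (phi 0)).
Proof.
intros HOm Hbeta Hn. split; [|split].
- intros om Hom. apply green_limit_below_band; auto.
- intros om Hom. apply green_limit_above_band; auto.
- intros om Hom Hne phi [Hphi _] M HM Hsupp.
  destruct (Rlt_dec om (beta * Om)).
  + apply green_distribution_below_band; auto.
  + apply green_distribution_above_band; auto. lra.
Qed.
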